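(* For the $n$-dimensional ($n\ge3$) rigid body with a flat face rubber-rolling on a sphere (as in the context): (C1) If $\mathbb J=\mathrm{diag}(J_1,\dots,J_n)$ and $a=0$, then the reduced equations of motion on $T^*\mathbb R^{n-1}$ are Hamiltonian (with respect to the canonical structure and Hamiltonian $H$) in the original time $t$, and preserve the Liouville measure $\nu$. (C2) If $\mathbb J=\mathrm{diag}(J_1,\dots,J_1,J_n)$, then the reduced equations preserve the measure $$\mu=\exp\Big(\frac{(n-2)ma}{2R(J_1+J_n+ma^2)}\sum_{i=1}^{n-1}X_i^2\Big)\nu,$$ and become Hamiltonian, $ds_i/d\tau=\partial\tilde H/\partial\tilde p_i$, $d\tilde p_i/d\tau=-\partial\tilde H/\partial s_i$ with $\tilde H(s,\tilde p)=H(s,e^{-\phi}\tilde p)$, after the reparametrisation $$dt=e^{-\phi}d\tau,\qquad p_i=e^{-\phi}\tilde p_i,\qquad \phi=\frac{ma}{2R(J_1+J_n+ma^2)}\sum_{i=1}^{n-1}X_i^2 .$$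
   Context: Fix $n\ge3$, $R>0$, $a\in\mathbb R$, $m>0$, symmetric positive definite $n\times n$ matrix $\mathbb J$. Configuration space $Q=\mathbb R^{n-1}\times SO(n)\ni((X_1,\dots,X_{n-1}),g)$, $X=(X_1,\dots,X_{n-1},R+a)^T$, $\Omega=g^{-1}\dot g\in\mathfrak{so}(n)$, $E_1,\dots,E_n$ the standard basis of $\mathbb R^n$. Lagrangian $L=\frac12(\mathbb J\Omega+\Omega\mathbb J,\Omega)_\kappa+\frac m2\|\dot X+\Omega X\|^2$ with $(\xi,\eta)_\kappa=-\frac12\mathrm{tr}(\xi\eta)$, $\dot X_n=0$. Constraints: $\dot X=-R\Omega E_n$ and $\Omega_{\mu\nu}=0$ for $1\le\mu,\nu\le n-1$, defining a distribution $\mathcal D$. The action $h\cdot(X,g)=(X,hg)$ of $SO(n)$ makes this an $SO(n)$-Chaplygin system with shape space $S=\mathbb R^{n-1}$, coordinates $s_i=X_i$. Its reduced equations on $T^*S$ (canonical coordinates $(s,p)$) are $\dot s_i=\partial H/\partial p_i$, $\dot p_i=-\partial H/\partial s_i-\sum_{j,k}C_{ij}^kp_k\partial H/\partial p_j$, where $H=\frac12\sum K^{ij}p_ip_j$, $K_{ij}=\langle\mathrm{hor}_q\partial_{s_i},\mathrm{hor}_q\partial_{s_j}\rangle$ (horizontal lift into $\mathcal D_q$, metric given by $L$), $K^{ij}$ its inverse, and $C_{ij}^k=\sum_lK^{kl}\langle[\mathrm{hor}_q\partial_{s_i},\mathrm{hor}_q\partial_{s_j}],\mathrm{hor}_q\partial_{s_l}\rangle$.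 $\nu=ds_1\cdots ds_{n-1}dp_1\cdots dp_{n-1}$ is the Liouville volume. *)

From Stdlib Require Import Reals ClassicalEpsilon Arith.
Open Scope R_scope.

Definition vec := nat -> R.
Definition mat := nat -> nat -> R.

Fixpoint sumR (k : nat) (f : nat -> R) : R :=
  match k with O => 0 | S k' => sumR k' f + f k' end.

Definition delta (i j : nat) : R := if Nat.eq_dec i j then 1 else 0.
Definition unitv (i : nat) : vec := fun k => delta i k.

Definition mmul (n : nat) (A B : mat) : mat :=
  fun i j => sumR n (fun k => A i k * B k j).
Definition madd (A B : mat) : mat := fun i j => A i j + B i j.
Definition mtr (A : mat) : mat := fun i j => A j i.
Definition trace (n : nat) (A : mat) : R := sumR n (fun i => A i i).
Definition mvec (n : nat) (A : mat) (v : vec) : vec :=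
  fun i => sumR n (fun k => A i k * v k).

(** determinant of the upper-left k x k block (Laplace expansion, first row) *)
Definition minor0 (A : mat) (j : nat) : mat :=
  fun r c => A (S r) (if Nat.ltb c j then c else S c).
Fixpoint det (k : nat) (A : mat) : R :=
  match k with
  | O => 1
  | S k' => sumR k (fun j => (-1) ^ j * A 0%nat j * det k' (minor0 A j))
  end.

Definition in_SO (n : nat) (g : mat) : Prop :=
  (forall i j, (i < n)%nat -> (j < n)%nat -> mmul n (mtr g) g i j = delta i j)
  /\ det n g = 1.

Definition symmetric_pd (n : nat) (J : mat) : Prop :=
  (forall i j, (i < n)%nat -> (j < n)%nat -> J i j = J j i) /\
  (forall v : vec, (exists i, (i < n)%nat /\ v i <> 0) ->
     0 < sumR n (fun i => sumR n (fun j => v i * J i j * v j))).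

Definition Dlim (f : R -> R) : R :=
  epsilon (inhabits 0) (fun l => derivable_pt_lim f 0 l).

(** * The configuration space Q = R^{n-1} x SO(n), in ambient coordinates
    (s, g) with s : vec (entries 0..n-2 are X_1..X_{n-1}) and g : mat.
    Tangent vectors are pairs (Xdot, gdot) in ambient coordinates. *)
Definition tvec := (vec * mat)%type.
Definition tadd (v w : tvec) : tvec :=
  (fun k => fst v k + fst w k, fun i j => snd v i j + snd w i j).
Definition tsub (v w : tvec) : tvec :=
  (fun k => fst v k - fst w k, fun i j => snd v i j - snd w i j).

(** X = (X_1, ..., X_{n-1}, R + a)^T  (0-based: index n-1 is the last one) *)
Definition posX (n : nat) (Rad a : R) (s : vec) : vec :=
  fun k => if Nat.ltb k (n - 1) then s k else Rad + a.

Definition Xdot_full (n : nat) (v : tvec) : vec :=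
  fun k => if Nat.ltb k (n - 1) then fst v k else 0.

(** body angular velocity Omega = g^{-1} gdot = g^T gdot (g orthogonal) *)
Definition bodyOm (n : nat) (g : mat) (v : tvec) : mat := mmul n (mtr g) (snd v).

Definition kappa (n : nat) (A B : mat) : R := - (1/2) * trace n (mmul n A B).

Definition Lag (n : nat) (Rad a m : R) (J : mat) (s : vec) (g : mat) (v : tvec) : R :=
  let Om := bodyOm n g v in
  let X := posX n Rad a s in
  let Xd := Xdot_full n v in
  (1/2) * kappa n (madd (mmul n J Om) (mmul n Om J)) Om
  + (m / 2) * sumR n (fun k => (Xd k + mvec n Om X k) ^ 2).

(** The kinetic energy metric <.,.>_q, i.e. L(v) = 1/2 <v,v>_q (polarization) *)
Definition metric (n : nat) (Rad a m : R) (J : mat) (s : vec) (g : mat) (v w : tvec) : R :=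
  Lag n Rad a m J s g (tadd v w) - Lag n Rad a m J s g v - Lag n Rad a m J s g w.

Definition in_D (n : nat) (Rad : R) (s : vec) (g : mat) (v : tvec) : Prop :=
  exists Om : mat,
    (forall i j, (i < n)%nat -> (j < n)%nat -> Om j i = - Om i j) /\
    (forall i j, (i < n - 1)%nat -> (j < n - 1)%nat -> Om i j = 0) /\
    (forall i j, (i < n)%nat -> (j < n)%nat -> snd v i j = mmul n g Om i j) /\
    (forall i, (i < n - 1)%nat -> fst v i = - Rad * mvec n Om (unitv (n - 1)) i).

Definition vfield := vec -> mat -> tvec.

Definition hor_spec (n : nat) (Rad : R) (hor : nat -> vfield) : Prop :=
  forall i, (i < n - 1)%nat -> forall (s : vec) (g : mat),
    in_D n Rad s g (hor i s g) /\
    (forall k, (k < n - 1)%nat -> fst (hor i s g) k = delta i k).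

Definition ddir (W : vfield) (s : vec) (g : mat) (v : tvec) : tvec :=
  (fun k => Dlim (fun t => fst (W (fun r => s r + t * fst v r)
                                  (fun r c => g r c + t * snd v r c)) k),
   fun i j => Dlim (fun t => snd (W (fun r => s r + t * fst v r)
                                  (fun r c => g r c + t * snd v r c)) i j)).

Definition bracket (V W : vfield) : vfield :=
  fun s g => tsub (ddir W s g (V s g)) (ddir V s g (W s g)).

(** * Data of the reduced (Chaplygin) system on T*S, S = R^{n-1}, computed at
    the points q = (s, g0) of the fibre through a fixed g0 in SO(n). *)
Definition Kmat (n : nat) (Rad a m : R) (J : mat) (hor : nat -> vfield) (g0 : mat)
  (s : vec) : mat :=
  fun i j => metric n Rad a m J s g0 (hor i s g0) (hor j s g0).

Definition is_inverse (k : nat) (A B : mat) : Prop :=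
  forall i j, (i < k)%nat -> (j < k)%nat -> sumR k (fun l => A i l * B l j) = delta i j.

Definition Ccoef (n : nat) (Rad a m : R) (J : mat) (hor : nat -> vfield) (g0 : mat)
  (Kinv : vec -> mat) (i j k : nat) (s : vec) : R :=
  sumR (n - 1) (fun l => Kinv s k l *
     metric n Rad a m J s g0 (bracket (hor i) (hor j) s g0) (hor l s g0)).

Definition Hred (n : nat) (Kinv : vec -> mat) (s p : vec) : R :=
  (1/2) * sumR (n - 1) (fun i => sumR (n - 1) (fun j => Kinv s i j * p i * p j)).

Definition upd (x : vec) (i : nat) (t : R) : vec :=
  fun r => if Nat.eq_dec r i then x r + t else x r.

Definition pd_s (F : vec -> vec -> R) (s p : vec) (i : nat) : R :=
  Dlim (fun t => F (upd s i t) p).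
Definition pd_p (F : vec -> vec -> R) (s p : vec) (i : nat) : R :=
  Dlim (fun t => F s (upd p i t)).

(** the reduced equations: sdot_i = Ys i, pdot_i = Yp i *)
Definition Ys (n : nat) (Kinv : vec -> mat) (i : nat) (s p : vec) : R :=
  pd_p (Hred n Kinv) s p i.
Definition Yp (n : nat) (Cc : nat -> nat -> nat -> vec -> R) (Kinv : vec -> mat)
  (i : nat) (s p : vec) : R :=
  - pd_s (Hred n Kinv) s p i
  - sumR (n - 1) (fun j => sumR (n - 1) (fun k =>
        Cc i j k s * p k * pd_p (Hred n Kinv) s p j)).

(** divergence of the vector field rho * Y (rho a density on S);
    the measure rho * nu is invariant iff this vanishes identically. *)
Definition div_weighted (n : nat) (rho : vec -> R)
  (Fs Fp : nat -> vec -> vec -> R) (s p : vec) : R :=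
  sumR (n - 1) (fun i =>
    pd_s (fun s' p' => rho s' * Fs i s' p') s p i
    + pd_p (fun s' p' => rho s' * Fp i s' p') s p i).

Definition lie_deriv (n : nat) (Fs Fp : nat -> vec -> vec -> R)
  (F : vec -> vec -> R) (s p : vec) : R :=
  sumR (n - 1) (fun j => pd_s F s p j * Fs j s p + pd_p F s p j * Fp j s p).

Definition sumsq (n : nat) (s : vec) : R := sumR (n - 1) (fun i => s i ^ 2).

(** For diagonal [J] the horizontal lift of [d/ds_i] has body angular velocity
    [(E_n e_i^T - e_i E_n^T)/R], so the reduced metric is
    [K = (D + m s s^T)/R^2] with [D = diag(J_i + J_n + m a^2)], inverted by
    Sherman–Morrison.  The bracket of two lifts is vertical with body angular
    velocity [(e_j e_i^T - e_i e_j^T)/R^2], which gives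
    [C_ij^k = -(m a/R^3)(K^kj s_i - K^ki s_j)].  Hence, with [v = K^-1 p], the
    reduced equations differ from Hamilton's by the gyroscopic force
    [(m a/R^3)(s_i |v|^2 - v_i <s,v>)], which vanishes when [a = 0], and the
    divergence of [rho Y] is
    [<grad rho, v> + rho (m a/R^3)(<v, K^-1 s> - tr K^-1 <s,v>)].
    When [D = d I], [K^-1 s = R^2 s/(d + m|s|^2)] and the divergence vanishes
    for [rho = exp((n-2) m a |s|^2/(2 R d))]; moreover the gyroscopic force
    becomes [(m a/(R d))(s_i <p,v> - p_i <s,v>)], which is exactly the term
    produced by the time change [dt = e^-phi dtau], [p = e^-phi p~]. *)

From Stdlib Require Import Reals Arith Lia Lra ClassicalEpsilon FunctionalExtensionality.
Open Scope R_scope.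

Lemma sumR_ext k f g : (forall c, (c < k)%nat -> f c = g c) -> sumR k f = sumR k g.
Proof.
  induction k as [|k IH]; intros Hfg; simpl; auto.
  rewrite IH, Hfg by (lia || (intros; apply Hfg; lia)). reflexivity.
Qed.

Lemma sumR_plus k f g : sumR k (fun c => f c + g c) = sumR k f + sumR k g.
Proof. induction k as [|k IH]; simpl; [ring | rewrite IH; ring]. Qed.

Lemma sumR_minus k f g : sumR k (fun c => f c - g c) = sumR k f - sumR k g.
Proof. induction k as [|k IH]; simpl; [ring | rewrite IH; ring]. Qed.

Lemma sumR_mult_l k x f : sumR k (fun c => x * f c) = x * sumR k f.
Proof. induction k as [|k IH]; simpl; [ring | rewrite IH; ring]. Qed.

Lemma sumR_const k x : sumR k (fun _ => x) = INR k * x.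
Proof. induction k as [|k IH]; simpl sumR; [simpl; ring | rewrite IH, S_INR; ring]. Qed.

Lemma sumR_0 k f : (forall c, (c < k)%nat -> f c = 0) -> sumR k f = 0.
Proof. intros Hf. rewrite (sumR_ext k f (fun _ => 0)), sumR_const by auto. ring. Qed.

Lemma sumR_single k f x : (x < k)%nat ->
  (forall c, (c < k)%nat -> c <> x -> f c = 0) -> sumR k f = f x.
Proof.
  induction k as [|k IH]; simpl; intros Hx Hf; [lia|].
  destruct (Nat.eq_dec x k) as [->|Hne].
  - rewrite sumR_0 by (intros; apply Hf; lia). ring.
  - rewrite IH, (Hf k) by (lia || (intros; apply Hf; lia)). ring.
Qed.

Lemma sumR_comm k l F :
  sumR k (fun a => sumR l (fun b => F a b)) = sumR l (fun b => sumR k (fun a => F a b)).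
Proof.
  induction k as [|k IH]; simpl.
  - rewrite sumR_0; auto.
  - rewrite IH, <- sumR_plus. reflexivity.
Qed.

Lemma sumR_nonneg k f : (forall c, (c < k)%nat -> 0 <= f c) -> 0 <= sumR k f.
Proof.
  induction k as [|k IH]; simpl; intros Hf; [lra|].
  pose proof (Hf k ltac:(lia)). pose proof (IH ltac:(intros; apply Hf; lia)). lra.
Qed.

Lemma sumR_split_last k f : (1 <= k)%nat -> sumR k f = sumR (k - 1) f + f (k - 1)%nat.
Proof. intros Hk. destruct k; [lia|]. simpl. rewrite Nat.sub_0_r. reflexivity. Qed.

Lemma delta_refl i : delta i i = 1.
Proof. unfold delta; destruct Nat.eq_dec; congruence. Qed.

Lemma delta_neq i j : i <> j -> delta i j = 0.
Proof. unfold delta; destruct Nat.eq_dec; congruence. Qed.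

Lemma delta_sym i j : delta i j = delta j i.
Proof. unfold delta; do 2 destruct Nat.eq_dec; congruence. Qed.

Lemma sumR_delta_l k x f : (x < k)%nat -> sumR k (fun c => delta x c * f c) = f x.
Proof.
  intros Hx. rewrite (sumR_single _ _ x), delta_refl by
    (auto; intros; rewrite delta_neq by auto; ring). ring.
Qed.

Lemma sumR_delta_r k x f : (x < k)%nat -> sumR k (fun c => delta c x * f c) = f x.
Proof.
  intros Hx. rewrite <- (sumR_delta_l k x f) by auto.
  apply sumR_ext; intros; rewrite delta_sym; reflexivity.
Qed.

Lemma sumR_delta2 k x y f g : (x < k)%nat -> (y < k)%nat ->
  sumR k (fun c => delta x c * f c + delta y c * g c) = f x + g y.
Proof. intros. rewrite sumR_plus, !sumR_delta_l; auto. Qed.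

Ltac delta_cases :=
  unfold delta in *; repeat destruct Nat.eq_dec; subst; try (exfalso; lia).

Lemma Dlim_of_derivable f l : derivable_pt_lim f 0 l -> Dlim f = l.
Proof.
  intros Hf. unfold Dlim. apply uniqueness_limite with f 0; auto.
  apply epsilon_spec. exists l; exact Hf.
Qed.

Lemma dpl_ext f g x l : (forall t, f t = g t) -> derivable_pt_lim f x l -> derivable_pt_lim g x l.
Proof. intros Hfg. replace g with f; auto. apply functional_extensionality; auto. Qed.

Lemma dpl_eq f x l l' : derivable_pt_lim f x l -> l = l' -> derivable_pt_lim f x l'.
Proof. intros; subst; auto. Qed.

Lemma dpl_const c x : derivable_pt_lim (fun _ => c) x 0.
Proof. exact (derivable_pt_lim_const c x). Qed.

Lemma dpl_plus f g x l1 l2 : derivable_pt_lim f x l1 -> derivable_pt_lim g x l2 ->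
  derivable_pt_lim (fun t => f t + g t) x (l1 + l2).
Proof. exact (derivable_pt_lim_plus f g x l1 l2). Qed.

Lemma dpl_mult f g x l1 l2 : derivable_pt_lim f x l1 -> derivable_pt_lim g x l2 ->
  derivable_pt_lim (fun t => f t * g t) x (l1 * g x + f x * l2).
Proof. exact (derivable_pt_lim_mult f g x l1 l2). Qed.

Lemma dpl_scal c f x l : derivable_pt_lim f x l -> derivable_pt_lim (fun t => c * f t) x (c * l).
Proof. intros. eapply dpl_eq; [apply (dpl_mult (fun _ => c) f); eauto using dpl_const | ring]. Qed.

Lemma dpl_opp f x l : derivable_pt_lim f x l -> derivable_pt_lim (fun t => - f t) x (- l).
Proof.
  intros. apply (dpl_ext (fun t => -1 * f t)); [intros; ring|].
  eapply dpl_eq; [apply dpl_scal; eauto | ring].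
Qed.

Lemma dpl_minus f g x l1 l2 : derivable_pt_lim f x l1 -> derivable_pt_lim g x l2 ->
  derivable_pt_lim (fun t => f t - g t) x (l1 - l2).
Proof. intros. apply dpl_plus; auto using dpl_opp. Qed.

Lemma dpl_square f x l : derivable_pt_lim f x l ->
  derivable_pt_lim (fun t => f t ^ 2) x (2 * f x * l).
Proof.
  intros. apply (dpl_ext (fun t => f t * f t)); [intros; ring|].
  eapply dpl_eq; [apply dpl_mult; eauto | ring].
Qed.

Lemma dpl_inv f x l : derivable_pt_lim f x l -> f x <> 0 ->
  derivable_pt_lim (fun t => / f t) x (- l / f x ^ 2).
Proof.
  intros Hf Hx. apply (dpl_ext (div_fct (fun _ => 1) f)); [intros; unfold div_fct, Rdiv; ring|].
  eapply dpl_eq.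
  - apply derivable_pt_lim_div; [apply dpl_const | exact Hf | exact Hx].
  - unfold Rsqr; field; auto.
Qed.

Lemma dpl_exp f x l : derivable_pt_lim f x l ->
  derivable_pt_lim (fun t => exp (f t)) x (exp (f x) * l).
Proof.
  intros. eapply dpl_eq; [apply (derivable_pt_lim_comp f exp); eauto using derivable_pt_lim_exp | ring].
Qed.

Lemma exp_opp_mult_exp x y : exp (- x) * (exp x * y) = y.
Proof. rewrite <- Rmult_assoc, <- exp_plus, Rplus_opp_l, exp_0. ring. Qed.

Lemma dpl_affine a b x : derivable_pt_lim (fun t => a + t * b) x b.
Proof.
  eapply dpl_eq; [apply dpl_plus; [apply dpl_const | apply (dpl_mult (fun t => t) (fun _ => b))] |].
  - apply derivable_pt_lim_id.
  - apply dpl_const.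
  - ring.
Qed.

Lemma dpl_sumR k F F' x : (forall c, (c < k)%nat -> derivable_pt_lim (F c) x (F' c)) ->
  derivable_pt_lim (fun t => sumR k (fun c => F c t)) x (sumR k F').
Proof.
  induction k as [|k IH]; simpl; intros HF; [apply dpl_const|].
  apply dpl_plus; [apply IH; intros; apply HF | apply HF]; lia.
Qed.

Lemma upd_0 p i : upd p i 0 = p.
Proof.
  apply functional_extensionality; intro j. unfold upd; destruct Nat.eq_dec; ring.
Qed.

Lemma dpl_upd p i j : derivable_pt_lim (fun t => upd p i t j) 0 (delta j i).
Proof.
  unfold upd, delta. destruct Nat.eq_dec.
  - apply (dpl_ext (fun t => p j + t * 1)); [intros; ring|].
    eapply dpl_eq; [apply dpl_affine | ring].
  - apply dpl_const.
Qed.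

(** * Horizontal lifts and the reduced metric *)

Definition diagonal (n : nat) (J : mat) : Prop :=
  forall i j, (i < n)%nat -> (j < n)%nat -> i <> j -> J i j = 0.

Lemma symmetric_pd_diag_pos n J i : symmetric_pd n J -> (i < n)%nat -> 0 < J i i.
Proof.
  intros [_ Hpd] Hi.
  replace (J i i) with (sumR n (fun a => sumR n (fun b => unitv i a * J a b * unitv i b))).
  - apply Hpd. exists i. unfold unitv. rewrite delta_refl. split; auto; lra.
  - unfold unitv. rewrite <- (sumR_delta_l n i (fun a => J a i)) by auto.
    apply sumR_ext; intros a Ha.
    rewrite <- (sumR_delta_l n i (fun b => delta i a * J a b)) by auto.
    apply sumR_ext; intros; ring.
Qed.

Section BodyFrame.
Variables (n : nat) (Rad : R).
Hypotheses (Hn : (2 <= n)%nat) (HR : 0 < Rad).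
Local Notation N := (n - 1)%nat.

(** Body angular velocities of the horizontal lift of [d/ds_i] and of the
    bracket of two such lifts. *)
Definition hor_om (i : nat) : mat :=
  fun a b => (delta N a * delta i b - delta i a * delta N b) / Rad.
Definition bracket_om (i j : nat) : mat :=
  fun a b => (delta j a * delta i b - delta i a * delta j b) / Rad ^ 2.

Lemma in_D_snd_hor s g v i : (i < N)%nat -> in_D n Rad s g v ->
  (forall k, (k < N)%nat -> fst v k = delta i k) ->
  forall r c, (r < n)%nat -> (c < n)%nat -> snd v r c = mmul n g (hor_om i) r c.
Proof.
  intros Hi [Om [Hskew [Hblock [Hsnd Hfst]]]] Hv r c Hr Hc.
  rewrite Hsnd by auto. unfold mmul. apply sumR_ext. intros k Hk. f_equal.
  assert (Hlast : forall b, (b < N)%nat -> Om b N = - delta i b / Rad).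
  { intros b Hb. specialize (Hfst b Hb). rewrite Hv in Hfst by auto.
    unfold mvec, unitv in Hfst.
    rewrite (sumR_ext _ _ (fun k => delta N k * Om b k)), sumR_delta_l in Hfst
      by (lia || (intros; ring)).
    rewrite Hfst. field. lra. }
  assert (Hdiag : Om N N = 0) by (pose proof (Hskew N N ltac:(lia) ltac:(lia)); lra).
  assert (Hk' : (k < N)%nat \/ k = N) by lia.
  assert (Hc' : (c < N)%nat \/ c = N) by lia.
  destruct Hk' as [Hk'| ->]; destruct Hc' as [Hc'| ->].
  - rewrite Hblock by auto. unfold hor_om. delta_cases; field; lra.
  - rewrite Hlast by auto. unfold hor_om. delta_cases; field; lra.
  - rewrite (Hskew c N), Hlast by lia. unfold hor_om. delta_cases; field; lra.
  - rewrite Hdiag. unfold hor_om. delta_cases; field; lra.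
Qed.

Lemma hor_om_commutator i j a b : (i < N)%nat -> (j < N)%nat ->
  sumR n (fun k => hor_om i a k * hor_om j k b) - sumR n (fun k => hor_om j a k * hor_om i k b)
  = bracket_om i j a b.
Proof.
  intros Hi Hj.
  assert (Hprod : forall i' j', (i' < N)%nat -> (j' < N)%nat ->
    sumR n (fun k => hor_om i' a k * hor_om j' k b)
    = - (delta N a * delta j' i' * delta N b + delta i' a * delta j' b) / Rad ^ 2).
  { intros i' j' Hi' Hj'.
    rewrite (sumR_ext n _ (fun k => delta i' k * (delta N a * hor_om j' k b / Rad)
                                 + delta N k * (- delta i' a * hor_om j' k b / Rad)))
      by (intros; unfold hor_om at 1; field; lra).
    rewrite sumR_delta2 by lia. unfold hor_om.
    rewrite delta_refl, (delta_neq N i'), (delta_neq j' N) by lia. field; lra. }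
  rewrite !Hprod by auto. unfold bracket_om. rewrite (delta_sym j i). field; lra.
Qed.

Lemma bodyOm_mmul g v W : in_SO n g ->
  (forall r c, (r < n)%nat -> (c < n)%nat -> snd v r c = mmul n g W r c) ->
  forall a b, (a < n)%nat -> (b < n)%nat -> bodyOm n g v a b = W a b.
Proof.
  intros [Horth _] Hv a b Ha Hb. unfold bodyOm, mmul, mtr.
  rewrite (sumR_ext _ _ (fun k => sumR n (fun l => g k a * g k l * W l b))).
  2:{ intros k Hk. rewrite Hv by auto. unfold mmul. rewrite <- sumR_mult_l.
      apply sumR_ext; intros; ring. }
  rewrite sumR_comm, <- (sumR_delta_l n a (fun l => W l b)) by auto.
  apply sumR_ext. intros l Hl. rewrite <- (Horth a l) by auto. unfold mmul, mtr.
  rewrite (sumR_ext _ _ (fun k => W l b * (g k a * g k l))), sumR_mult_l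
    by (intros; ring). ring.
Qed.

Definition body_metric (a m : R) (J : mat) (s : vec) (Ov : mat) (xv : vec) (Ow : mat) (xw : vec) : R :=
  -(1/4) * sumR n (fun i => sumR n (fun k => (J i i + J k k) * (Ov i k * Ow k i + Ow i k * Ov k i)))
  + m * sumR n (fun k => (xv k + sumR n (fun l => Ov k l * posX n Rad a s l)) *
                         (xw k + sumR n (fun l => Ow k l * posX n Rad a s l))).

Lemma Lag_diagonal a m J s g v : diagonal n J ->
  Lag n Rad a m J s g v =
  1/2 * (-(1/2) * sumR n (fun i => sumR n (fun k => (J i i + J k k) * bodyOm n g v i k * bodyOm n g v k i)))
  + m/2 * sumR n (fun k => (Xdot_full n v k + sumR n (fun l => bodyOm n g v k l * posX n Rad a s l)) ^ 2).
Proof.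
  intros HJ. unfold Lag, kappa, trace, mvec; cbv zeta.
  do 3 f_equal. apply sumR_ext; intros i Hi. unfold mmul at 1. apply sumR_ext; intros k Hk.
  unfold madd, mmul at 1 2. f_equal.
  rewrite (sumR_single n (fun k0 => J i k0 * _) i), (sumR_single n (fun k0 => _ * J k0 k) k); auto.
  - unfold mmul. ring.
  - intros c Hc Hne. rewrite HJ; auto; ring.
  - intros c Hc Hne. rewrite HJ; auto; ring.
Qed.

Lemma metric_diagonal a m J s g v w : diagonal n J ->
  metric n Rad a m J s g v w =
  body_metric a m J s (bodyOm n g v) (Xdot_full n v) (bodyOm n g w) (Xdot_full n w).
Proof.
  intros HJ. unfold metric, body_metric. rewrite !Lag_diagonal by auto.
  set (U := bodyOm n g v). set (W := bodyOm n g w).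
  set (xu := Xdot_full n v). set (xw := Xdot_full n w). set (X := posX n Rad a s).
  assert (HOm : forall i k, bodyOm n g (tadd v w) i k = U i k + W i k).
  { intros i k. unfold U, W, bodyOm, mmul, tadd; simpl. rewrite <- sumR_plus.
    apply sumR_ext; intros; ring. }
  assert (HXd : forall k, Xdot_full n (tadd v w) k = xu k + xw k).
  { intros k. unfold xu, xw, Xdot_full, tadd; simpl. destruct (Nat.ltb k N); ring. }
  rewrite (sumR_ext n (fun i => sumR n (fun k => _ * bodyOm n g (tadd v w) i k * _))
    (fun i => sumR n (fun k => (J i i + J k k) * U i k * U k i)
            + sumR n (fun k => (J i i + J k k) * W i k * W k i)
            + sumR n (fun k => (J i i + J k k) * (U i k * W k i + W i k * U k i)))).
  2:{ intros i Hi. rewrite <- !sumR_plus. apply sumR_ext; intros. rewrite !HOm. ring. }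
  rewrite (sumR_ext n (fun k => (Xdot_full n (tadd v w) k + _) ^ 2)
    (fun k => (xu k + sumR n (fun l => U k l * X l)) ^ 2
            + (xw k + sumR n (fun l => W k l * X l)) ^ 2
            + 2 * ((xu k + sumR n (fun l => U k l * X l)) * (xw k + sumR n (fun l => W k l * X l))))).
  2:{ intros k Hk. rewrite HXd.
      rewrite (sumR_ext n (fun l => _ * X l) (fun l => U k l * X l + W k l * X l))
        by (intros; rewrite HOm; ring).
      rewrite sumR_plus. ring. }
  rewrite !sumR_plus, sumR_mult_l. fold xu xw U W. field.
Qed.

Lemma body_metric_ext a m J s Ov xv Ow xw Ov' xv' Ow' xw' :
  (forall a b, (a < n)%nat -> (b < n)%nat -> Ov a b = Ov' a b) ->
  (forall a b, (a < n)%nat -> (b < n)%nat -> Ow a b = Ow' a b) ->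
  (forall k, (k < n)%nat -> xv k = xv' k) -> (forall k, (k < n)%nat -> xw k = xw' k) ->
  body_metric a m J s Ov xv Ow xw = body_metric a m J s Ov' xv' Ow' xw'.
Proof.
  intros HOv HOw Hxv Hxw. unfold body_metric. f_equal; f_equal.
  - apply sumR_ext; intros. apply sumR_ext; intros. rewrite !HOv, !HOw; auto.
  - apply sumR_ext; intros k Hk. rewrite Hxv, Hxw by auto. f_equal; f_equal.
    + apply sumR_ext; intros. rewrite HOv; auto.
    + apply sumR_ext; intros. rewrite HOw; auto.
Qed.

Lemma posX_lt a s i : (i < N)%nat -> posX n Rad a s i = s i.
Proof. intros; unfold posX. destruct (Nat.ltb_spec i N); auto; lia. Qed.

Lemma posX_last a s : posX n Rad a s N = Rad + a.
Proof. unfold posX. destruct (Nat.ltb_spec N N); auto; lia. Qed.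

Lemma hor_om_posX a s i k : (i < N)%nat ->
  sumR n (fun l => hor_om i k l * posX n Rad a s l) = (delta N k * s i - delta i k * (Rad + a)) / Rad.
Proof.
  intros Hi.
  rewrite (sumR_ext _ _ (fun l => delta i l * (delta N k * posX n Rad a s l / Rad)
                                 + delta N l * (- delta i k * posX n Rad a s l / Rad)))
    by (intros; unfold hor_om; field; lra).
  rewrite sumR_delta2, posX_lt, posX_last by lia. field; lra.
Qed.

Lemma bracket_om_posX a s i j k : (i < N)%nat -> (j < N)%nat ->
  sumR n (fun l => bracket_om i j k l * posX n Rad a s l) = (delta j k * s i - delta i k * s j) / Rad ^ 2.
Proof.
  intros Hi Hj.
  rewrite (sumR_ext _ _ (fun l => delta i l * (delta j k * posX n Rad a s l / Rad ^ 2)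
                                 + delta j l * (- delta i k * posX n Rad a s l / Rad ^ 2)))
    by (intros; unfold bracket_om; field; lra).
  rewrite sumR_delta2, !posX_lt by lia. field; lra.
Qed.

Lemma body_metric_hor_hor a m J s i j : (i < N)%nat -> (j < N)%nat ->
  body_metric a m J s (hor_om i) (unitv i) (hor_om j) (unitv j)
  = (delta i j * (J i i + J N N + m * a ^ 2) + m * s i * s j) / Rad ^ 2.
Proof.
  intros Hi Hj. unfold body_metric.
  rewrite (sumR_ext n (fun k => (unitv i k + _) * (unitv j k + _))
     (fun k => delta i k * (delta j k * a ^ 2 / Rad ^ 2) + delta N k * (s i * s j / Rad ^ 2))).
  2:{ intros k Hk. rewrite !hor_om_posX by auto. unfold unitv. delta_cases; field; lra. }
  rewrite sumR_delta2, (sumR_split_last n) by lia.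
  rewrite (sumR_ext N _ (fun x => delta i x * ((J x x + J N N) * (-2 * delta j x / Rad ^ 2)))).
  2:{ intros x Hx. rewrite (sumR_single n _ N) by
        (lia || (intros; unfold hor_om; delta_cases; field; lra)).
      unfold hor_om. delta_cases; field; lra. }
  rewrite sumR_delta_l by lia.
  rewrite (sumR_single n _ i) by (lia || (intros; unfold hor_om; delta_cases; field; lra)).
  unfold hor_om. delta_cases; field; lra.
Qed.

Lemma hor_om_block i r c : (r < N)%nat -> (c < N)%nat -> hor_om i r c = 0.
Proof. intros. unfold hor_om. rewrite (delta_neq N r), (delta_neq N c) by lia. field; lra. Qed.

Lemma bracket_om_last_l i j c : (i < N)%nat -> (j < N)%nat -> bracket_om i j N c = 0.
Proof. intros. unfold bracket_om. rewrite (delta_neq i N), (delta_neq j N) by lia. field; lra. Qed.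

Lemma bracket_om_last_r i j r : (i < N)%nat -> (j < N)%nat -> bracket_om i j r N = 0.
Proof. intros. unfold bracket_om. rewrite (delta_neq i N), (delta_neq j N) by lia. field; lra. Qed.

Lemma body_metric_bracket_hor a m J s i j l : (i < N)%nat -> (j < N)%nat -> (l < N)%nat ->
  body_metric a m J s (bracket_om i j) (fun _ => 0) (hor_om l) (unitv l)
  = - (m * a / Rad ^ 3) * (delta j l * s i - delta i l * s j).
Proof.
  intros Hi Hj Hl. unfold body_metric.
  rewrite (sumR_0 n (fun x => sumR n _)).
  2:{ intros x Hx. apply sumR_0. intros k Hk.
      assert (x < N \/ x = N)%nat as [Hx'| ->] by lia;
      assert (k < N \/ k = N)%nat as [Hk'| ->] by lia;
      rewrite ?hor_om_block, ?bracket_om_last_l, ?bracket_om_last_r by auto; ring. }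
  rewrite (sumR_ext n (fun k => (0 + _) * (unitv l k + _))
     (fun k => delta l k * (-(a / Rad ^ 3) * (delta j k * s i - delta i k * s j)))).
  2:{ intros k Hk. rewrite hor_om_posX, bracket_om_posX by auto. unfold unitv.
      delta_cases; field; lra. }
  rewrite sumR_delta_l by lia. field; lra.
Qed.

End BodyFrame.

Section HorizontalLifts.
Variables (n : nat) (Rad a m : R) (J : mat) (hor : nat -> vfield) (g0 : mat).
Hypotheses (Hn : (2 <= n)%nat) (HR : 0 < Rad) (HJ : diagonal n J)
  (Hhor : hor_spec n Rad hor) (HSO : in_SO n g0).
Local Notation N := (n - 1)%nat.

Lemma hor_snd i s g r c : (i < N)%nat -> (r < n)%nat -> (c < n)%nat ->
  snd (hor i s g) r c = mmul n g (hor_om n Rad i) r c.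
Proof. intros Hi. destruct (Hhor i Hi s g). eapply in_D_snd_hor; eauto. Qed.

Lemma hor_bodyOm i s r c : (i < N)%nat -> (r < n)%nat -> (c < n)%nat ->
  bodyOm n g0 (hor i s g0) r c = hor_om n Rad i r c.
Proof. intros. apply bodyOm_mmul; auto. intros; apply hor_snd; auto. Qed.

Lemma hor_Xdot i s k : (i < N)%nat -> (k < n)%nat -> Xdot_full n (hor i s g0) k = unitv i k.
Proof.
  intros Hi Hk. unfold Xdot_full, unitv. destruct (Nat.ltb_spec k N).
  - apply (Hhor i Hi s g0); auto.
  - rewrite delta_neq; auto; lia.
Qed.

Lemma Kmat_diagonal s i j : (i < N)%nat -> (j < N)%nat ->
  Kmat n Rad a m J hor g0 s i j = (delta i j * (J i i + J N N + m * a ^ 2) + m * s i * s j) / Rad ^ 2.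
Proof.
  intros Hi Hj. unfold Kmat. rewrite metric_diagonal by auto.
  rewrite (body_metric_ext n Rad _ _ _ _ _ _ _ _ (hor_om n Rad i) (unitv i) (hor_om n Rad j) (unitv j))
    by (intros; auto using hor_bodyOm, hor_Xdot).
  apply body_metric_hor_hor; auto.
Qed.

Lemma ddir_hor_snd i j s r c : (i < N)%nat -> (j < N)%nat -> (r < n)%nat -> (c < n)%nat ->
  snd (ddir (hor j) s g0 (hor i s g0)) r c =
  sumR n (fun l => g0 r l * sumR n (fun k => hor_om n Rad i l k * hor_om n Rad j k c)).
Proof.
  intros Hi Hj Hr Hc. unfold ddir; simpl. apply Dlim_of_derivable.
  eapply dpl_ext; [intros t; symmetry; apply hor_snd; auto|].
  apply (dpl_eq _ _ (sumR n (fun k => snd (hor i s g0) r k * hor_om n Rad j k c))).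
  - unfold mmul.
    apply (dpl_sumR n (fun k t => (g0 r k + t * snd (hor i s g0) r k) * hor_om n Rad j k c)).
    intros k Hk. eapply dpl_eq.
    + apply (dpl_mult (fun t => g0 r k + t * _) (fun _ => hor_om n Rad j k c));
        [apply dpl_affine | apply dpl_const].
    + ring.
  - rewrite (sumR_ext n _ (fun k => sumR n (fun l => g0 r l * hor_om n Rad i l k * hor_om n Rad j k c))).
    2:{ intros k Hk. rewrite hor_snd by auto. unfold mmul.
        rewrite (Rmult_comm _ (hor_om n Rad j k c)), <- sumR_mult_l.
        apply sumR_ext; intros; ring. }
    rewrite sumR_comm. apply sumR_ext; intros. rewrite <- sumR_mult_l. apply sumR_ext; intros; ring.
Qed.

Lemma ddir_hor_fst i j s k : (j < N)%nat -> (k < N)%nat ->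
  fst (ddir (hor j) s g0 (hor i s g0)) k = 0.
Proof.
  intros Hj Hk. unfold ddir; simpl. apply Dlim_of_derivable.
  eapply dpl_ext; [intros t; symmetry; apply (Hhor j Hj); auto | apply dpl_const].
Qed.

Lemma bracket_bodyOm i j s r c : (i < N)%nat -> (j < N)%nat -> (r < n)%nat -> (c < n)%nat ->
  bodyOm n g0 (bracket (hor i) (hor j) s g0) r c = bracket_om Rad i j r c.
Proof.
  intros Hi Hj Hr Hc. rewrite <- (hor_om_commutator n) by (lia || lra).
  apply (bodyOm_mmul n g0 _ (fun a b => sumR n (fun k => hor_om n Rad i a k * hor_om n Rad j k b)
                                   - sumR n (fun k => hor_om n Rad j a k * hor_om n Rad i k b))); auto.
  - intros r' c' Hr' Hc'. unfold bracket, tsub; cbn [snd].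
    rewrite !ddir_hor_snd by auto. unfold mmul. rewrite <- sumR_minus. apply sumR_ext; intros; ring.
Qed.

Lemma bracket_Xdot i j s k : (i < N)%nat -> (j < N)%nat ->
  Xdot_full n (bracket (hor i) (hor j) s g0) k = 0.
Proof.
  intros Hi Hj. unfold Xdot_full. destruct (Nat.ltb_spec k N); auto.
  unfold bracket, tsub; cbn [fst]. rewrite !ddir_hor_fst by auto. ring.
Qed.

Lemma metric_bracket_hor i j l s : (i < N)%nat -> (j < N)%nat -> (l < N)%nat ->
  metric n Rad a m J s g0 (bracket (hor i) (hor j) s g0) (hor l s g0)
  = - (m * a / Rad ^ 3) * (delta j l * s i - delta i l * s j).
Proof.
  intros Hi Hj Hl. rewrite metric_diagonal by auto.
  rewrite (body_metric_ext n Rad _ _ _ _ _ _ _ _ (bracket_om Rad i j) (fun _ => 0) (hor_om n Rad l) (unitv l))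
    by (intros; auto using bracket_bodyOm, bracket_Xdot, hor_bodyOm, hor_Xdot).
  apply body_metric_bracket_hor; auto.
Qed.

End HorizontalLifts.

Lemma left_inverse_eq_right_inverse k (B K Ki : mat) :
  (forall x c, (x < k)%nat -> (c < k)%nat -> sumR k (fun b => B x b * K b c) = delta x c) ->
  is_inverse k K Ki -> forall x y, (x < k)%nat -> (y < k)%nat -> Ki x y = B x y.
Proof.
  intros HB HKi x y Hx Hy.
  rewrite <- (sumR_delta_l k x (fun c => Ki c y)) by auto.
  rewrite (sumR_ext k _ (fun c => sumR k (fun b => B x b * K b c * Ki c y))).
  2:{ intros c Hc. rewrite <- HB by auto. rewrite (Rmult_comm _ (Ki c y)), <- sumR_mult_l.
      apply sumR_ext; intros; ring. }
  rewrite sumR_comm, <- (sumR_delta_r k y (fun b => B x b)) by auto.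
  apply sumR_ext. intros b Hb. rewrite <- HKi by auto. rewrite Rmult_comm, <- sumR_mult_l.
  apply sumR_ext; intros; ring.
Qed.

Section ShermanMorrison.
Variables (N : nat) (Rad m : R) (dd : nat -> R).
Hypotheses (HR : 0 < Rad) (Hm : 0 < m) (Hdd : forall i, (i < N)%nat -> 0 < dd i).

Definition Kform (s : vec) : mat := fun x y => (delta x y * dd x + m * s x * s y) / Rad ^ 2.

Definition weighted_sumsq (s : vec) : R := sumR N (fun c => s c ^ 2 / dd c).

Definition Kform_inv (s : vec) : mat := fun x y =>
  Rad ^ 2 * (delta x y / dd x - m * (s x / dd x) * (s y / dd y) / (1 + m * weighted_sumsq s)).

Lemma weighted_sumsq_nonneg s : 0 <= weighted_sumsq s.
Proof.
  apply sumR_nonneg. intros c Hc. pose proof (Hdd c Hc).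
  apply Rmult_le_pos; [nra | left; apply Rinv_0_lt_compat; auto].
Qed.

Lemma Kform_inv_denom_pos s : 0 < 1 + m * weighted_sumsq s.
Proof. pose proof (weighted_sumsq_nonneg s). nra. Qed.

Lemma Kform_inv_mul_Kform s x c : (x < N)%nat -> (c < N)%nat ->
  sumR N (fun b => Kform_inv s x b * Kform s b c) = delta x c.
Proof.
  intros Hx Hc. pose proof (Kform_inv_denom_pos s). pose proof (Hdd x Hx).
  rewrite (sumR_ext N _ (fun b => delta x b * (Rad ^ 2 / dd x * Kform s b c)
     - (Rad ^ 2 * m * (s x / dd x) / (1 + m * weighted_sumsq s)) * (s b / dd b * Kform s b c))).
  2:{ intros b Hb. unfold Kform_inv. pose proof (Hdd b Hb). field. split; lra. }
  rewrite sumR_minus, sumR_delta_l, sumR_mult_l by auto.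
  rewrite (sumR_ext N _ (fun b => delta b c * (s b / dd b * dd b / Rad ^ 2)
                              + (m * s c / Rad ^ 2) * (s b ^ 2 / dd b))).
  2:{ intros b Hb. unfold Kform. pose proof (Hdd b Hb). field. split; lra. }
  rewrite sumR_plus, sumR_delta_r, sumR_mult_l by auto. fold (weighted_sumsq s).
  unfold Kform. pose proof (Hdd c Hc). field. split; lra.
Qed.

Lemma Kform_inv_sym s x y : Kform_inv s x y = Kform_inv s y x.
Proof.
  destruct (Nat.eq_dec x y) as [->|Hne]; auto.
  unfold Kform_inv. rewrite !delta_neq by auto. unfold Rdiv; ring.
Qed.

Lemma Kform_inv_derivable s i x y :
  exists l, derivable_pt_lim (fun t => Kform_inv (upd s i t) x y) 0 l.
Proof.
  eexists. unfold Kform_inv, weighted_sumsq, Rdiv.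
  repeat first
    [ apply dpl_const
    | apply dpl_upd
    | apply dpl_plus
    | apply dpl_minus
    | apply dpl_opp
    | apply dpl_mult
    | apply (dpl_sumR N (fun c t => upd s i t c ^ 2 * / dd c)); intros c Hc
    | apply dpl_square
    | apply dpl_inv ].
  rewrite upd_0. pose proof (Kform_inv_denom_pos s). unfold weighted_sumsq, Rdiv in *. lra.
Qed.

End ShermanMorrison.

(** * The reduced vector field *)

Definition quad (k : nat) (K : mat) (p : vec) : R :=
  sumR k (fun a => sumR k (fun b => K a b * p a * p b)).

Lemma quad_scal k K c p : quad k K (fun j => c * p j) = c ^ 2 * quad k K p.
Proof.
  unfold quad. rewrite <- sumR_mult_l. apply sumR_ext; intros.
  rewrite <- sumR_mult_l. apply sumR_ext; intros; ring.
Qed.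

Lemma dpl_quad k (Kt : R -> mat) (pt : R -> vec) (dK : mat) (dp : vec) :
  (forall a b, (a < k)%nat -> (b < k)%nat -> derivable_pt_lim (fun t => Kt t a b) 0 (dK a b)) ->
  (forall a, (a < k)%nat -> derivable_pt_lim (fun t => pt t a) 0 (dp a)) ->
  derivable_pt_lim (fun t => quad k (Kt t) (pt t)) 0
    (sumR k (fun a => sumR k (fun b =>
       dK a b * pt 0 a * pt 0 b + Kt 0 a b * dp a * pt 0 b + Kt 0 a b * pt 0 a * dp b))).
Proof.
  intros HK Hp. unfold quad.
  apply (dpl_sumR k (fun a t => sumR k (fun b => Kt t a b * pt t a * pt t b))). intros a Ha.
  apply (dpl_sumR k (fun b t => Kt t a b * pt t a * pt t b)). intros b Hb.
  eapply dpl_eq.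
  - apply (dpl_mult (fun t => Kt t a b * pt t a) (fun t => pt t b)); auto.
    apply (dpl_mult (fun t => Kt t a b) (fun t => pt t a)); auto.
  - ring.
Qed.

Lemma dpl_quad_upd k K p i : (i < k)%nat ->
  (forall a b, (a < k)%nat -> (b < k)%nat -> K a b = K b a) ->
  derivable_pt_lim (fun t => quad k K (upd p i t)) 0 (2 * sumR k (fun b => K i b * p b)).
Proof.
  intros Hi Hsym. eapply dpl_eq.
  - apply (dpl_quad k (fun _ => K) (fun t => upd p i t) (fun _ _ => 0) (fun a => delta a i)).
    + intros; apply dpl_const.
    + intros; apply dpl_upd.
  - rewrite upd_0.
    rewrite (sumR_ext k _ (fun a => delta a i * sumR k (fun b => K a b * p b) + K i a * p a)).
    2:{ intros a Ha.
        rewrite (sumR_ext k _ (fun b => delta a i * (K a b * p b) + p a * (delta b i * K a b)))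
          by (intros; ring).
        rewrite sumR_plus, !sumR_mult_l, sumR_delta_r, Hsym by auto. ring. }
    rewrite sumR_plus, sumR_delta_r by auto. ring.
Qed.

Lemma Hred_scal n Kinv s c p : Hred n Kinv s (fun k => c * p k) = c ^ 2 * Hred n Kinv s p.
Proof.
  unfold Hred. fold (quad (n - 1) (Kinv s) (fun k => c * p k)).
  rewrite quad_scal. unfold quad. ring.
Qed.

Section ReducedSystem.
Variables (n : nat) (Rad m ca : R) (dd : nat -> R) (Kinv : vec -> mat)
  (C : nat -> nat -> nat -> vec -> R).
Local Notation N := (n - 1)%nat.
Local Notation B := (Kform_inv N Rad m dd).
Hypotheses (Hm : 0 < m) (Hdd : forall i, (i < N)%nat -> 0 < dd i).
Hypothesis HK : forall s x y, (x < N)%nat -> (y < N)%nat -> Kinv s x y = B s x y.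
Hypothesis HC : forall i j k s, (i < N)%nat -> (j < N)%nat -> (k < N)%nat ->
  C i j k s = - ca * (B s k j * s i - B s k i * s j).

Definition velocity (s p : vec) (i : nat) : R := sumR N (fun b => B s i b * p b).
Definition dKinv (i : nat) (s : vec) : mat := fun x y => Dlim (fun t => B (upd s i t) x y).

Lemma dKinv_spec i s x y : derivable_pt_lim (fun t => B (upd s i t) x y) 0 (dKinv i s x y).
Proof.
  destruct (Kform_inv_derivable N Rad m dd Hm Hdd s i x y) as [l Hl].
  unfold dKinv. rewrite (Dlim_of_derivable _ l Hl). exact Hl.
Qed.

Lemma dKinv_sym i s x y : dKinv i s x y = dKinv i s y x.
Proof. unfold dKinv. f_equal. apply functional_extensionality; intro t. apply Kform_inv_sym. Qed.

Lemma Hred_eq s p : Hred n Kinv s p = 1/2 * quad N (B s) p.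
Proof.
  unfold Hred, quad. f_equal. apply sumR_ext; intros. apply sumR_ext; intros. rewrite HK; auto.
Qed.

Lemma dpl_Hred_p s p i : (i < N)%nat ->
  derivable_pt_lim (fun t => Hred n Kinv s (upd p i t)) 0 (velocity s p i).
Proof.
  intros Hi. apply (dpl_ext (fun t => 1/2 * quad N (B s) (upd p i t))); [intros; rewrite Hred_eq; auto|].
  eapply dpl_eq; [apply dpl_scal, dpl_quad_upd; auto using Kform_inv_sym | unfold velocity; field].
Qed.

Lemma Ys_eq i s p : (i < N)%nat -> Ys n Kinv i s p = velocity s p i.
Proof. intros Hi. apply Dlim_of_derivable, dpl_Hred_p; auto. Qed.

Lemma dpl_Hred_s s p i :
  derivable_pt_lim (fun t => Hred n Kinv (upd s i t) p) 0 (1/2 * quad N (dKinv i s) p).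
Proof.
  apply (dpl_ext (fun t => 1/2 * quad N (B (upd s i t)) p)); [intros; rewrite Hred_eq; auto|].
  apply dpl_scal. eapply dpl_eq.
  - apply (dpl_quad N (fun t => B (upd s i t)) (fun _ => p) (dKinv i s) (fun _ => 0)).
    + intros; apply dKinv_spec.
    + intros; apply dpl_const.
  - unfold quad. apply sumR_ext; intros. apply sumR_ext; intros. ring.
Qed.

Lemma pd_s_Hred i s p : pd_s (Hred n Kinv) s p i = 1/2 * quad N (dKinv i s) p.
Proof. apply Dlim_of_derivable, dpl_Hred_s. Qed.

Lemma Yp_eq i s p : (i < N)%nat ->
  Yp n C Kinv i s p = - pd_s (Hred n Kinv) s p i
    + ca * (s i * sumR N (fun j => velocity s p j ^ 2)
            - velocity s p i * sumR N (fun j => s j * velocity s p j)).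
Proof.
  intros Hi. unfold Yp.
  rewrite (sumR_ext N _ (fun j => - ca * (s i * velocity s p j ^ 2 - velocity s p i * (s j * velocity s p j)))).
  - rewrite sumR_mult_l, sumR_minus, !sumR_mult_l. ring.
  - intros j Hj. fold (Ys n Kinv j s p). rewrite Ys_eq by auto.
    rewrite (sumR_ext N _ (fun k => (- ca * velocity s p j * s i) * (B s j k * p k)
                                 + (ca * velocity s p j * s j) * (B s i k * p k))).
    + rewrite sumR_plus, !sumR_mult_l. unfold velocity. ring.
    + intros k Hk. rewrite HC, (Kform_inv_sym _ _ _ _ s k j), (Kform_inv_sym _ _ _ _ s k i) by auto.
      ring.
Qed.

Lemma Yp_eq_nongyroscopic i s p : (i < N)%nat -> ca = 0 ->
  Yp n C Kinv i s p = - pd_s (Hred n Kinv) s p i.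
Proof. intros Hi Hca. rewrite Yp_eq, Hca by auto. ring. Qed.

Lemma dpl_velocity_p i j s p : (i < N)%nat ->
  derivable_pt_lim (fun t => velocity s (upd p i t) j) 0 (B s j i).
Proof.
  intros Hi. unfold velocity. eapply dpl_eq.
  - apply (dpl_sumR N (fun b t => B s j b * upd p i t b) (fun b => delta b i * B s j b)).
    intros b Hb. eapply dpl_eq; [apply dpl_scal, dpl_upd | ring].
  - apply sumR_delta_r; auto.
Qed.

Lemma dpl_velocity_s i s p :
  derivable_pt_lim (fun t => velocity (upd s i t) p i) 0 (sumR N (fun b => dKinv i s i b * p b)).
Proof.
  unfold velocity. apply (dpl_sumR N (fun b t => B (upd s i t) i b * p b)). intros b Hb.
  eapply dpl_eq; [apply (dpl_mult _ (fun _ => p b)); [apply dKinv_spec | apply dpl_const] | ring].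
Qed.

Lemma velocity_comm s p q : sumR N (fun i => p i * velocity s q i) = sumR N (fun j => q j * velocity s p j).
Proof.
  unfold velocity. rewrite <- (sumR_ext N (fun i => sumR N (fun j => p i * B s i j * q j))).
  - rewrite sumR_comm. apply sumR_ext; intros j Hj. rewrite <- sumR_mult_l.
    apply sumR_ext; intros. rewrite Kform_inv_sym. ring.
  - intros. rewrite <- sumR_mult_l. apply sumR_ext; intros; ring.
Qed.

Lemma dpl_Yp_p i s p : (i < N)%nat ->
  derivable_pt_lim (fun t => Yp n C Kinv i s (upd p i t)) 0
    (- sumR N (fun b => dKinv i s i b * p b)
     + ca * (2 * s i * velocity s (velocity s p) i
             - B s i i * sumR N (fun j => s j * velocity s p j)
             - velocity s p i * velocity s s i)).
Proof.
  intros Hi.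
  eapply dpl_ext; [intros t; symmetry; rewrite Yp_eq, pd_s_Hred by auto; reflexivity|].
  eapply dpl_eq.
  - apply dpl_plus; [apply dpl_opp, dpl_scal, dpl_quad_upd; auto using dKinv_sym |].
    apply dpl_scal, dpl_minus.
    + apply dpl_scal, (dpl_sumR N (fun j t => velocity s (upd p i t) j ^ 2)). intros j Hj.
      apply dpl_square, dpl_velocity_p; auto.
    + apply dpl_mult; [apply dpl_velocity_p; auto |].
      apply (dpl_sumR N (fun j t => s j * velocity s (upd p i t) j)). intros j Hj.
      apply dpl_scal, dpl_velocity_p; auto.
  - cbv beta. rewrite upd_0.
    replace (sumR N (fun j => 2 * velocity s p j * B s j i)) with (2 * velocity s (velocity s p) i).
    replace (sumR N (fun j => s j * B s j i)) with (velocity s s i).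
    + field.
    + unfold velocity. apply sumR_ext; intros. rewrite Kform_inv_sym. ring.
    + unfold velocity. rewrite <- sumR_mult_l. apply sumR_ext; intros. rewrite Kform_inv_sym. ring.
Qed.

Lemma div_weighted_eq (rho : vec -> R) (drho : nat -> R) s p :
  (forall i, (i < N)%nat -> derivable_pt_lim (fun t => rho (upd s i t)) 0 (drho i)) ->
  div_weighted n rho (Ys n Kinv) (Yp n C Kinv) s p =
  sumR N (fun i => drho i * velocity s p i)
  + rho s * ca * (sumR N (fun j => velocity s p j * velocity s s j)
                  - sumR N (fun i => B s i i) * sumR N (fun j => s j * velocity s p j)).
Proof.
  intros Hrho. unfold div_weighted, pd_s, pd_p.
  rewrite (sumR_ext N _ (fun i => drho i * velocity s p i
     + rho s * ca * (2 * (s i * velocity s (velocity s p) i)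
                     - B s i i * sumR N (fun j => s j * velocity s p j)
                     - velocity s p i * velocity s s i))).
  2:{ intros i Hi.
      rewrite (Dlim_of_derivable _ (drho i * velocity s p i + rho s * sumR N (fun b => dKinv i s i b * p b))).
      2:{ apply (dpl_ext (fun t => rho (upd s i t) * velocity (upd s i t) p i));
            [intros; rewrite Ys_eq; auto|].
          eapply dpl_eq; [apply dpl_mult; [apply Hrho | apply dpl_velocity_s]; auto |].
          cbv beta. rewrite upd_0. reflexivity. }
      rewrite (Dlim_of_derivable _ _ (dpl_scal (rho s) _ _ _ (dpl_Yp_p i s p Hi))).
      ring. }
  rewrite sumR_plus, sumR_mult_l, !sumR_minus, sumR_mult_l, (velocity_comm s s (velocity s p)).
  rewrite (sumR_ext N (fun c => B s c c * _) (fun c => sumR N (fun j => s j * velocity s p j) * B s c c))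
    by (intros; apply Rmult_comm).
  rewrite sumR_mult_l. ring.
Qed.

Lemma div_weighted_nongyroscopic s p : ca = 0 ->
  div_weighted n (fun _ => 1) (Ys n Kinv) (Yp n C Kinv) s p = 0.
Proof.
  intros Hca. rewrite (div_weighted_eq (fun _ => 1) (fun _ => 0)), Hca by (intros; apply dpl_const).
  rewrite sumR_0 by (intros; ring). ring.
Qed.

Lemma quad_velocity s p : quad N (B s) p = sumR N (fun j => p j * velocity s p j).
Proof.
  unfold quad, velocity. apply sumR_ext; intros. rewrite <- sumR_mult_l. apply sumR_ext; intros; ring.
Qed.

Lemma velocity_scal s c p i : velocity s (fun k => c * p k) i = c * velocity s p i.
Proof. unfold velocity. rewrite <- sumR_mult_l. apply sumR_ext; intros; ring. Qed.

Lemma Ys_reparam (phi : vec -> R) s pt i : (i < N)%nat ->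
  exp (- phi s) * Ys n Kinv i s (fun k => exp (- phi s) * pt k)
  = pd_p (fun s' q => Hred n Kinv s' (fun k => exp (- phi s') * q k)) s pt i.
Proof.
  intros Hi. rewrite Ys_eq, velocity_scal by auto. symmetry. apply Dlim_of_derivable.
  apply (dpl_ext (fun t => exp (- phi s) ^ 2 * Hred n Kinv s (upd pt i t)));
    [intros; rewrite Hred_scal; reflexivity |].
  eapply dpl_eq; [apply dpl_scal, dpl_Hred_p; auto | ring].
Qed.

Lemma pd_s_Hred_reparam (phi : vec -> R) dphi s pt i :
  derivable_pt_lim (fun t => phi (upd s i t)) 0 dphi ->
  pd_s (fun s' q => Hred n Kinv s' (fun k => exp (- phi s') * q k)) s pt i
  = - 2 * dphi * Hred n Kinv s (fun k => exp (- phi s) * pt k)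
    + pd_s (Hred n Kinv) s (fun k => exp (- phi s) * pt k) i.
Proof.
  intros Hphi. rewrite pd_s_Hred, Hred_eq, quad_scal, quad_scal. apply Dlim_of_derivable.
  apply (dpl_ext (fun t => exp (- phi (upd s i t)) ^ 2 * Hred n Kinv (upd s i t) pt));
    [intros; rewrite Hred_scal; reflexivity |].
  eapply dpl_eq.
  - apply dpl_mult; [apply dpl_square, dpl_exp, dpl_opp, Hphi | apply dpl_Hred_s].
  - cbv beta. rewrite upd_0, Hred_eq. ring.
Qed.

Lemma lie_deriv_momentum (phi : vec -> R) (dphi : nat -> R) s p i : (i < N)%nat ->
  (forall j, (j < N)%nat -> derivable_pt_lim (fun t => phi (upd s j t)) 0 (dphi j)) ->
  lie_deriv n (Ys n Kinv) (Yp n C Kinv) (fun s' p' => exp (phi s') * p' i) s p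
  = exp (phi s) * (p i * sumR N (fun j => dphi j * velocity s p j) + Yp n C Kinv i s p).
Proof.
  intros Hi Hphi. unfold lie_deriv, pd_s, pd_p.
  rewrite (sumR_ext N _ (fun j => exp (phi s) * p i * (dphi j * velocity s p j)
                               + delta j i * (exp (phi s) * Yp n C Kinv j s p))).
  - rewrite sumR_plus, sumR_mult_l, sumR_delta_r by auto. ring.
  - intros j Hj. rewrite Ys_eq by auto.
    rewrite (Dlim_of_derivable _ (exp (phi s) * dphi j * p i)).
    + rewrite (Dlim_of_derivable _ (exp (phi s) * delta i j)).
      * rewrite delta_sym. ring.
      * apply dpl_scal, dpl_upd.
    + eapply dpl_eq.
      * apply (dpl_mult _ (fun _ => p i)); [apply dpl_exp, Hphi; auto | apply dpl_const].
      * cbv beta. rewrite upd_0. ring.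
Qed.

End ReducedSystem.

Lemma inertia_sum_pos n J m a i : symmetric_pd n J -> 0 < m -> (i < n - 1)%nat ->
  0 < J i i + J (n - 1)%nat (n - 1)%nat + m * a ^ 2.
Proof.
  intros HJ Hm Hi.
  pose proof (symmetric_pd_diag_pos n J i HJ ltac:(lia)).
  pose proof (symmetric_pd_diag_pos n J (n - 1) HJ ltac:(lia)). nra.
Qed.

Lemma axisymmetric_inertia n (J : mat) J1 Jn x : (1 <= n)%nat ->
  (forall i j, (i < n)%nat -> (j < n)%nat ->
     J i j = if Nat.eq_dec i j then (if Nat.ltb i (n - 1) then J1 else Jn) else 0) ->
  diagonal n J /\ forall i, (i < n - 1)%nat -> J1 + Jn + x = J i i + J (n - 1)%nat (n - 1)%nat + x.
Proof.
  intros Hn HJ. split.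
  - intros i j Hi Hj Hij. rewrite HJ by auto. destruct Nat.eq_dec; congruence.
  - intros i Hi. rewrite !HJ by lia.
    destruct Nat.eq_dec; [|congruence]. destruct Nat.eq_dec; [|congruence].
    destruct (Nat.ltb_spec i (n - 1)), (Nat.ltb_spec (n - 1) (n - 1)); lia || reflexivity.
Qed.

Section RubberRolling.
Variables (n : nat) (Rad a m : R) (J : mat) (hor : nat -> vfield) (g0 : mat)
  (Kinv : vec -> mat) (dd : nat -> R).
Local Notation N := (n - 1)%nat.
Hypotheses (Hn : (2 <= n)%nat) (HR : 0 < Rad) (Hm : 0 < m) (HJ : diagonal n J)
  (Hhor : hor_spec n Rad hor) (HSO : in_SO n g0)
  (Hdd : forall i, (i < N)%nat -> 0 < dd i)
  (Hddeq : forall i, (i < N)%nat -> dd i = J i i + J N N + m * a ^ 2)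
  (HKinv : forall s, is_inverse N (Kmat n Rad a m J hor g0 s) (Kinv s)).

Lemma Kinv_eq s x y : (x < N)%nat -> (y < N)%nat -> Kinv s x y = Kform_inv N Rad m dd s x y.
Proof.
  apply (left_inverse_eq_right_inverse N _ (Kmat n Rad a m J hor g0 s)); auto.
  intros x' c Hx Hc. rewrite <- (Kform_inv_mul_Kform N Rad m dd HR Hm Hdd s x' c) by auto.
  apply sumR_ext; intros l Hl. rewrite Kmat_diagonal, <- Hddeq by auto. reflexivity.
Qed.

Lemma Ccoef_eq i j k s : (i < N)%nat -> (j < N)%nat -> (k < N)%nat ->
  Ccoef n Rad a m J hor g0 Kinv i j k s
  = - (m * a / Rad ^ 3) * (Kform_inv N Rad m dd s k j * s i - Kform_inv N Rad m dd s k i * s j).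
Proof.
  intros Hi Hj Hk. unfold Ccoef.
  rewrite (sumR_ext N _ (fun l => delta j l * (- (m * a / Rad ^ 3) * s i * Kform_inv N Rad m dd s k l)
      - delta i l * (- (m * a / Rad ^ 3) * s j * Kform_inv N Rad m dd s k l))).
  - rewrite sumR_minus, !sumR_delta_l by auto. ring.
  - intros l Hl. rewrite metric_bracket_hor, Kinv_eq by auto. ring.
Qed.

End RubberRolling.

Lemma sumsq_nonneg n s : 0 <= sumsq n s.
Proof. apply sumR_nonneg; intros. nra. Qed.

Lemma dpl_sumsq n s i : (i < n - 1)%nat ->
  derivable_pt_lim (fun t => sumsq n (upd s i t)) 0 (2 * s i).
Proof.
  intros Hi. unfold sumsq. eapply dpl_eq.
  - apply (dpl_sumR (n - 1) (fun c t => upd s i t c ^ 2) (fun c => delta c i * (2 * s c))).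
    intros c Hc. eapply dpl_eq; [apply dpl_square, dpl_upd | cbv beta; rewrite upd_0; ring].
  - apply sumR_delta_r; auto.
Qed.

Section ConstantInertia.
Variables (n : nat) (Rad m d : R).
Hypotheses (Hm : 0 < m) (Hd : 0 < d).
Local Notation N := (n - 1)%nat.
Local Notation B := (Kform_inv N Rad m (fun _ => d)).
Local Notation vel := (velocity n Rad m (fun _ => d)).

Definition Kdenom (s : vec) : R := d + m * sumsq n s.

Lemma Kdenom_pos s : 0 < Kdenom s.
Proof. unfold Kdenom. pose proof (sumsq_nonneg n s). nra. Qed.

Lemma Kform_inv_const s x y : B s x y = Rad ^ 2 * (delta x y / d - m * s x * s y / (d * Kdenom s)).
Proof.
  pose proof (Kdenom_pos s). unfold Kform_inv, weighted_sumsq, Kdenom in *.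
  rewrite (sumR_ext N _ (fun c => / d * s c ^ 2)), sumR_mult_l by (intros; field; lra).
  fold (sumsq n s).
  replace (1 + m * (/ d * sumsq n s)) with ((d + m * sumsq n s) / d) by (field; lra).
  field. lra.
Qed.

Lemma velocity_const s p i : (i < N)%nat ->
  vel s p i = Rad ^ 2 / d * (p i - m * sumR N (fun j => s j * p j) * s i / Kdenom s).
Proof.
  intros Hi. pose proof (Kdenom_pos s). unfold velocity.
  rewrite (sumR_ext N _ (fun b => delta i b * (Rad ^ 2 / d * p b)
                          - (Rad ^ 2 * m * s i / (d * Kdenom s)) * (s b * p b))).
  - rewrite sumR_minus, sumR_delta_l, sumR_mult_l by auto. field. lra.
  - intros. rewrite Kform_inv_const. field. lra.
Qed.

Lemma velocity_self_const s i : (i < N)%nat -> vel s s i = Rad ^ 2 * s i / Kdenom s.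
Proof.
  intros Hi. pose proof (Kdenom_pos s). rewrite velocity_const by auto.
  replace (sumR N (fun j => s j * s j)) with (sumsq n s)
    by (unfold sumsq; apply sumR_ext; intros; ring).
  unfold Kdenom in *. field. lra.
Qed.

Lemma trace_Kform_inv_const s :
  sumR N (fun i => B s i i) = Rad ^ 2 / d * (INR N - m * sumsq n s / Kdenom s).
Proof.
  pose proof (Kdenom_pos s).
  rewrite (sumR_ext N _ (fun i => Rad ^ 2 / d - (Rad ^ 2 * m / (d * Kdenom s)) * s i ^ 2)).
  - rewrite sumR_minus, sumR_const, sumR_mult_l. fold (sumsq n s). field. lra.
  - intros. rewrite Kform_inv_const, delta_refl. field. lra.
Qed.

Lemma gyroscopic_const s p i : (i < N)%nat ->
  s i * sumR N (fun j => vel s p j ^ 2) - vel s p i * sumR N (fun j => s j * vel s p j)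
  = Rad ^ 2 / d * (s i * sumR N (fun j => p j * vel s p j) - p i * sumR N (fun j => s j * vel s p j)).
Proof.
  intros Hi. pose proof (Kdenom_pos s).
  set (sp := sumR N (fun j => s j * p j)).
  rewrite (sumR_ext N (fun j => vel s p j ^ 2)
             (fun j => Rad ^ 2 / d * (p j * vel s p j)
                       - (Rad ^ 2 / d * m * sp / Kdenom s) * (s j * vel s p j))).
  - rewrite sumR_minus, !sumR_mult_l, (velocity_const s p i) by auto. fold sp. field. lra.
  - intros j Hj. transitivity (vel s p j * vel s p j); [ring|].
    rewrite (velocity_const s p j) at 1 by auto. fold sp. field. lra.
Qed.

End ConstantInertia.

Section AxisymmetricBody.
Variables (n : nat) (Rad a m d : R) (Kinv : vec -> mat) (C : nat -> nat -> nat -> vec -> R).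
Local Notation N := (n - 1)%nat.
Local Notation B := (Kform_inv N Rad m (fun _ => d)).
Local Notation vel := (velocity n Rad m (fun _ => d)).
Hypotheses (Hn : (2 <= n)%nat) (HR : 0 < Rad) (Hm : 0 < m) (Hd : 0 < d).
Hypothesis HK : forall s x y, (x < N)%nat -> (y < N)%nat -> Kinv s x y = B s x y.
Hypothesis HC : forall i j k s, (i < N)%nat -> (j < N)%nat -> (k < N)%nat ->
  C i j k s = - (m * a / Rad ^ 3) * (B s k j * s i - B s k i * s j).

Lemma div_weighted_exp_sumsq s p :
  div_weighted n (fun s => exp ((INR n - 2) * m * a / (2 * Rad * d) * sumsq n s))
    (Ys n Kinv) (Yp n C Kinv) s p = 0.
Proof.
  set (k := (INR n - 2) * m * a / (2 * Rad * d)).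
  rewrite (div_weighted_eq _ _ _ _ _ _ _ Hm (fun _ _ => Hd) HK HC _
             (fun i => exp (k * sumsq n s) * (k * (2 * s i)))).
  2:{ intros i Hi. eapply dpl_eq; [apply dpl_exp, dpl_scal, dpl_sumsq; auto |].
      cbv beta. rewrite upd_0. reflexivity. }
  rewrite (sumR_ext N (fun j => vel s p j * vel s s j) (fun j => Rad ^ 2 / Kdenom n m d s * (s j * vel s p j)))
    by (intros; rewrite velocity_self_const by auto; field; apply Rgt_not_eq, Kdenom_pos; auto).
  rewrite (sumR_ext N (fun i => _ * vel s p i) (fun i => exp (k * sumsq n s) * (2 * k) * (s i * vel s p i)))
    by (intros; ring).
  rewrite !sumR_mult_l, trace_Kform_inv_const, minus_INR by (auto || lia).
  pose proof (Kdenom_pos n m d Hm Hd s). unfold Kdenom in *. unfold k. simpl INR.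
  field. lra.
Qed.

Lemma Yp_reparam s pt i : (i < N)%nat ->
  let phi := fun s => m * a / (2 * Rad * d) * sumsq n s in
  let p := fun k => exp (- phi s) * pt k in
  exp (- phi s) * lie_deriv n (Ys n Kinv) (Yp n C Kinv) (fun s' p' => exp (phi s') * p' i) s p
  = - pd_s (fun s' q => Hred n Kinv s' (fun k => exp (- phi s') * q k)) s pt i.
Proof.
  intros Hi phi p.
  set (c := m * a / (2 * Rad * d)).
  assert (Hphi : forall j, (j < N)%nat -> derivable_pt_lim (fun t => phi (upd s j t)) 0 (c * (2 * s j)))
    by (intros; apply dpl_scal, dpl_sumsq; auto).
  rewrite (lie_deriv_momentum _ _ _ _ _ C HK phi (fun j => c * (2 * s j))) by auto.
  rewrite (pd_s_Hred_reparam _ _ _ _ _ Hm (fun _ _ => Hd) HK phi (c * (2 * s i))) by auto.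
  fold p.
  rewrite (Yp_eq _ _ _ _ _ _ _ HK HC), (Hred_eq _ _ _ _ _ HK),
    quad_velocity, gyroscopic_const by auto.
  rewrite (sumR_ext N (fun j => c * (2 * s j) * vel s p j) (fun j => 2 * c * (s j * vel s p j)))
    by (intros; ring).
  rewrite sumR_mult_l, exp_opp_mult_exp.
  unfold c. field. lra.
Qed.

End AxisymmetricBody.

Theorem mainTheorem7 (n : nat) (Rad a m : R) (J : mat)
  (hor : nat -> vfield) (g0 : mat) (Kinv : vec -> mat) :
  (3 <= n)%nat -> 0 < Rad -> 0 < m -> symmetric_pd n J ->
  hor_spec n Rad hor -> in_SO n g0 ->
  (forall s, is_inverse (n - 1) (Kmat n Rad a m J hor g0 s) (Kinv s)) ->
  let C := Ccoef n Rad a m J hor g0 Kinv in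
  let H := Hred n Kinv in
  let Y_s := Ys n Kinv in
  let Y_p := Yp n C Kinv in
  (* (C1) *)
  ((forall i j, (i < n)%nat -> (j < n)%nat -> i <> j -> J i j = 0) -> a = 0 ->
     (forall i s p, (i < n - 1)%nat -> Y_p i s p = - pd_s H s p i)
     /\ (forall s p, div_weighted n (fun _ => 1) Y_s Y_p s p = 0))
  /\
  (* (C2) *)
  (forall J1 Jn : R,
     (forall i j, (i < n)%nat -> (j < n)%nat ->
        J i j = if Nat.eq_dec i j then (if Nat.ltb i (n - 1) then J1 else Jn) else 0) ->
     let phi := fun s => m * a / (2 * Rad * (J1 + Jn + m * a ^ 2)) * sumsq n s in
     (forall s p,
        div_weighted n
          (fun s => exp ((INR n - 2) * m * a / (2 * Rad * (J1 + Jn + m * a ^ 2)) * sumsq n s))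
          Y_s Y_p s p = 0)
     /\
     (let Ht := fun s pt => H s (fun k => exp (- phi s) * pt k) in
      forall s pt i, (i < n - 1)%nat ->
        let p := fun k => exp (- phi s) * pt k in
        exp (- phi s) * Y_s i s p = pd_p Ht s pt i /\
        exp (- phi s) * lie_deriv n Y_s Y_p (fun s' p' => exp (phi s') * p' i) s p
          = - pd_s Ht s pt i)).
Proof.
  intros Hn3 HR Hm HJpd Hhor HSO HKinv C H Y_s Y_p.
  assert (Hn : (2 <= n)%nat) by lia.
  split.
  - intros HJ Ha.
    set (dd := fun i => J i i + J (n - 1)%nat (n - 1)%nat + m * a ^ 2).
    assert (Hdd : forall i, (i < n - 1)%nat -> 0 < dd i) by (intros; apply inertia_sum_pos; auto).
    pose proof (Kinv_eq n Rad a m J hor g0 Kinv dd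
                  Hn HR Hm HJ Hhor HSO Hdd (fun _ _ => eq_refl) HKinv) as HK.
    pose proof (Ccoef_eq n Rad a m J hor g0 Kinv dd
                  Hn HR Hm HJ Hhor HSO Hdd (fun _ _ => eq_refl) HKinv) as HC.
    assert (Hca : m * a / Rad ^ 3 = 0) by (rewrite Ha; unfold Rdiv; ring).
    split; intros.
    + apply (Yp_eq_nongyroscopic _ _ _ _ _ _ _ HK HC); auto.
    + apply (div_weighted_nongyroscopic _ _ _ _ _ _ _ Hm Hdd HK HC); auto.
  - intros J1 Jn HJ phi.
    destruct (axisymmetric_inertia n J J1 Jn (m * a ^ 2) ltac:(lia) HJ) as [HJd Hddeq].
    set (d := J1 + Jn + m * a ^ 2) in *.
    assert (Hd : 0 < d) by (rewrite (Hddeq 0%nat) by lia; apply inertia_sum_pos; auto; lia).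
    pose proof (Kinv_eq n Rad a m J hor g0 Kinv (fun _ => d)
                  Hn HR Hm HJd Hhor HSO (fun _ _ => Hd) Hddeq HKinv) as HK.
    pose proof (Ccoef_eq n Rad a m J hor g0 Kinv (fun _ => d)
                  Hn HR Hm HJd Hhor HSO (fun _ _ => Hd) Hddeq HKinv) as HC.
    split.
    + intros s p. apply (div_weighted_exp_sumsq n Rad a m d Kinv C); auto.
    + intros Ht s pt i Hi p.
      split; [apply (Ys_reparam _ _ _ _ _ HK) | apply (Yp_reparam n Rad a m d Kinv C)]; auto.
Qed.
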